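(* Consider an instance of the uncapacitated food delivery problem with $k\ge1$ vehicles on a tree $T=(V,E)$ rooted at the depot $o$, let $F>0$ be at least the optimum offline maximum flow time, and fix an offline optimum solution. Let $R'\subseteq R$, and let $\mathcal{P}$ be the set of trips in the optimum solution that serve at least one request in $R'$. Then every edge $e\in E$ is used by at least $c_F(R',e)$ trips in $\mathcal{P}$; consequently the total length of the trips in $\mathcal{P}$ is at least $\mathrm{cost}_F(R')$.
   Context: FDP: a graph (here a tree) with lengths $\ell:E\to\mathbb{R}_{>0}$, depot $o$, $k$ unit-speed vehicles at $o$, capacity $c$ (here $c=\infty$), requests $\rho=(r_\rho,v_\rho)$ with arrival time $r_\rho\ge0$ and delivery location $v_\rho\in V$. A trip is a closed walk from $o$ to $o$ not visiting $o$ in between, started at some time $t$, serving a set of requests with $r_\rho\le t$ whose locations it visits; a request is served when the walk first reaches its location. Each vehicle performs trips sequentially; every request is served exactly once; flow time of $\rho$ = service time $-\,r_\rho$; objective: minimize maximum flow time. Tree notation: $V_v$ is the set of descendants of $v$ (including $v$); for an edge $e=(u,v)$ with $v$ the child, $V_e=V_v$. For $X\subseteq V$, $\mathrm{mst}(X)$ is the total length of the minimal subtree of $T$ containing $X\cup\{o\}$, and $\mathrm{mst}_e(X)=\mathrm{mst}(V_e\cap X)$; a set of requests is identified with the set of its delivery locations. $c_F(X,e)=\lceil \mathrm{mst}_e(X)/F\rceil$ and $\mathrm{cost}_F(X)=2\sum_{e\in E}c_F(X,e)\ell(e)$. *)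

From HB Require Import structures.
From mathcomp Require Import all_boot all_order all_algebra.
From mathcomp Require Import reals.
Set Implicit Arguments. Unset Strict Implicit. Unset Printing Implicit Defensive.
Import Order.TTheory GRing.Theory Num.Theory.
Local Open Scope ring_scope.

Section FDP.
Variables (R : realType) (V : finType) (o : V) (par : V -> V) (len : V -> R).
(* Rooted tree: every v <> o has the edge (par v, v) of length [len v];
   an edge is identified with its child endpoint v (v != o). *)

Definition is_rooted_tree : Prop :=
  par o = o /\ forall v : V, exists n : nat, iter n par v = o.

Definition pos_lengths : Prop := forall v : V, v != o -> 0 < len v.

Definition up_rel : rel V := fun x y => (x != o) && (par x == y).

(* u \in V_v : u is a descendant of v (including v itself) *)
Definition desc (u v : V) : bool := connect up_rel u v.

Definition adj : rel V := fun u w => up_rel u w || up_rel w u.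

Definition steplen (u w : V) : R :=
  if up_rel u w then len u else if up_rel w u then len w else 0.

(* A trip is given by p : seq V, the closed walk being o :: p. *)
Definition walk (p : seq V) : seq V := o :: p.

Definition valid_trip (p : seq V) : bool :=
  [&& path adj o p, last o p == o & all (fun v => v != o) (behead (belast o p))].

Definition time_to (p : seq V) (n : nat) : R :=
  \sum_(i < n) steplen (nth o (walk p) i) (nth o (walk p) i.+1).

Definition trip_len (p : seq V) : R := time_to p (size p).

Definition arrive (p : seq V) (v : V) : R := time_to p (index v (walk p)).

Definition uses_edge (p : seq V) (e : V) : bool :=
  has (fun uw : V * V => ((uw.1 == e) && (uw.2 == par e)) ||
                         ((uw.2 == e) && (uw.1 == par e)))
      (zip (walk p) p).

Variables (Req : finType) (rel_t : Req -> R) (loc : Req -> V) (k : nat).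

(* A solution: for each vehicle, the sequence of its trips (start time, walk),
   plus for each request the trip (vehicle, index) serving it. *)
Record solution := Solution {
  sched : 'I_k -> seq (R * seq V);
  asg : Req -> 'I_k * nat }.

Definition trip_of (S : solution) (i : 'I_k) (j : nat) : R * seq V :=
  nth (0, [::]) (sched S i) j.

Definition feasible (S : solution) : Prop :=
  (forall i j, (j < size (sched S i))%N -> valid_trip (trip_of S i j).2) /\
  (forall i j, (j < size (sched S i))%N -> 0 <= (trip_of S i j).1) /\
  (forall i j, (j.+1 < size (sched S i))%N ->
     (trip_of S i j).1 + trip_len (trip_of S i j).2 <= (trip_of S i j.+1).1) /\
  (forall q : Req,
     let: (i, j) := asg S q in
     [/\ (j < size (sched S i))%N,
         loc q \in walk (trip_of S i j).2 &
         rel_t q <= (trip_of S i j).1]).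

Definition service_time (S : solution) (q : Req) : R :=
  let: (i, j) := asg S q in
  (trip_of S i j).1 + arrive (trip_of S i j).2 (loc q).

Definition flow_time (S : solution) (q : Req) : R := service_time S q - rel_t q.

Definition max_flow (S : solution) : R :=
  \big[Num.max/0]_(q : Req) flow_time S q.

Definition optimal (S : solution) : Prop :=
  feasible S /\ forall S' : solution, feasible S' -> max_flow S <= max_flow S'.

Definition serves_some (S : solution) (X : {set Req}) (i : 'I_k) (j : nat) : bool :=
  [exists q in X, asg S q == (i, j)].

(* mst(Y): total length of the minimal subtree containing Y \cup {o} *)
Definition mst (Y : {set V}) : R :=
  \sum_(w : V | (w != o) && [exists u in Y, desc u w]) len w.

(* mst_e(X) = mst(V_e \cap X), requests identified with their locations *)
Definition mst_e (X : {set Req}) (e : V) : R :=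
  mst [set u | (u \in [set loc q | q in X]) && desc u e].

Definition cF (F : R) (X : {set Req}) (e : V) : int := Num.ceil (mst_e X e / F).

Definition costF (F : R) (X : {set Req}) : R :=
  2 * \sum_(e : V | e != o) (cF F X e)%:~R * len e.

Definition n_trips_using (S : solution) (X : {set Req}) (e : V) : nat :=
  \sum_(i < k) count (fun j => serves_some S X i j && uses_edge (trip_of S i j).2 e)
                     (iota 0 (size (sched S i))).

Definition total_len (S : solution) (X : {set Req}) : R :=
  \sum_(i < k) \sum_(j <- iota 0 (size (sched S i)) | serves_some S X i j)
      trip_len (trip_of S i j).2.

End FDP.

From HB Require Import structures.
From mathcomp Require Import all_boot all_order all_algebra.
From mathcomp Require Import reals.
From mathcomp Require Import zify lra.
Import Order.TTheory GRing.Theory Num.Theory.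
Local Open Scope ring_scope.

(* A trip serving locations Y, the last of which it reaches t time units after
   its start, has walked over every edge of the subtree spanned by Y and o within
   that time, so mst(Y) <= t <= F: flow times are at most F and a trip starts
   after the release of its requests.  The requests of R' below an edge e are
   covered by the trips of P serving them; each such trip uses e and spans a
   subtree of length at most F, so subadditivity of mst bounds mst_e(R') by F
   times the number of trips of P using e.  A closed walk from o crosses every
   edge it uses at least twice, which turns these per-edge counts into the bound
   on the total length of P. *)

Set Implicit Arguments. Unset Strict Implicit. Unset Printing Implicit Defensive.

Lemma exists_flip (f : nat -> bool) a b : (a <= b)%N -> f a != f b ->
  exists2 i, (a <= i < b)%N & f i != f i.+1.
Proof.
elim: b => [|b IH]; first by rewrite leqn0 => /eqP ->; rewrite eqxx.
rewrite leq_eqVlt => /orP[/eqP -> |]; first by rewrite eqxx.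
rewrite ltnS => ab fab.
case: (eqVneq (f a) (f b)) => [fab'|ne].
  by exists b; [rewrite ab leqnn | rewrite -fab'].
have [i /andP[ai ib] fi] := IH ab ne.
by exists i => //; rewrite ai ltnS ltnW.
Qed.

Section Walks.
Variables (R : realType) (V : finType) (o : V) (par : V -> V) (len : V -> R).
Local Notation up_rel := (up_rel o par).
Local Notation desc := (desc o par).
Local Notation adj := (adj o par).
Local Notation walk := (walk o).
Local Notation vtx p m := (nth o (walk p) m).
Local Notation mst := (mst o par len).

Lemma desc_root w : desc o w -> w = o.
Proof.
case/connectP => -[|y q] /=; first by move=> _ ->.
by case/andP; rewrite /up_rel eqxx.
Qed.

Lemma desc_par u : u != o -> desc u (par u).
Proof. by move=> uo; apply: connect1; rewrite /up_rel uo eqxx. Qed.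

Lemma desc_par_trans u w : desc u w -> u != w -> desc (par u) w.
Proof.
case/connectP => -[|y q] /=; first by move=> _ ->; rewrite eqxx.
case/andP => /andP[uo /eqP <-] pq -> _.
by apply/connectP; exists q.
Qed.

Definition edge_of (u w : V) : V := if up_rel u w then u else w.

Lemma steplen_adj u w : adj u w -> steplen o par len u w = len (edge_of u w).
Proof. by rewrite /adj /steplen /edge_of; case: (up_rel u w) => //= ->. Qed.

Lemma edge_of_neq_root u w : adj u w -> edge_of u w != o.
Proof.
rewrite /adj /edge_of; case H: (up_rel u w) => /=; first by case/andP: H.
by case/andP.
Qed.

Lemma edge_of_desc_flip u w e : adj u w -> desc u e != desc w e -> edge_of u w = e.
Proof.
rewrite /adj /edge_of; case H: (up_rel u w) => /= Ha.
  case/andP: H => uo /eqP pw.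
  case Du: (desc u e); case Dw: (desc w e) => //= _.
    case: (eqVneq u e) => // ne.
    by have := desc_par_trans Du ne; rewrite pw Dw.
  have : desc u e by apply: connect_trans (desc_par uo) _; rewrite pw.
  by rewrite Du.
case/andP: Ha => wo /eqP pu.
case Du: (desc u e); case Dw: (desc w e) => //= _.
  have : desc w e by apply: connect_trans (desc_par wo) _; rewrite pu.
  by rewrite Dw.
case: (eqVneq w e) => // ne.
by have := desc_par_trans Dw ne; rewrite pu Du.
Qed.

Lemma adj_vtx p m : path adj o p -> (m < size p)%N -> adj (vtx p m) (vtx p m.+1).
Proof. by move/pathP; apply. Qed.

Definition crossings (p : seq V) (n : nat) (e : V) : nat :=
  #|[pred i : 'I_n | edge_of (vtx p i) (vtx p i.+1) == e]|.

Lemma crossing_before p m w : path adj o p -> (m <= size p)%N -> w != o ->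
  desc (vtx p m) w -> exists2 i, (i < m)%N & edge_of (vtx p i) (vtx p i.+1) = w.
Proof.
move=> pa mp wo dmw.
have [|i /andP[_ im] flip] := exists_flip (f := fun i => desc (vtx p i) w) (leq0n m).
  by rewrite dmw; apply: contra wo => /eqP/desc_root ->.
by exists i => //; apply: edge_of_desc_flip flip; apply: adj_vtx (leq_trans im mp).
Qed.

Lemma crossings_gt0 p m n w : path adj o p -> (m <= n <= size p)%N -> w != o ->
  desc (vtx p m) w -> (0 < crossings p n w)%N.
Proof.
move=> pa /andP[mn np] wo dmw.
have [i im iw] := crossing_before pa (leq_trans mn np) wo dmw.
by apply/card_gt0P; exists (Ordinal (leq_trans im mn)); rewrite inE /= iw.
Qed.

Lemma time_to_crossings p n : path adj o p -> (n <= size p)%N ->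
  time_to o par len p n = \sum_(e | e != o) len e *+ crossings p n e.
Proof.
move=> pa np; have adj_i (i : 'I_n) := adj_vtx pa (leq_trans (ltn_ord i) np).
pose edge_at (i : 'I_n) := edge_of (vtx p i) (vtx p i.+1).
rewrite /time_to (eq_bigr (fun i => len (edge_at i))); last first.
  by move=> i _; rewrite steplen_adj.
rewrite (partition_big edge_at (fun e => e != o)) //=.
  by apply: eq_bigr => e _; rewrite -sumr_const; apply: eq_big => [i|i /eqP ->].
by move=> i _; apply: edge_of_neq_root.
Qed.

Lemma uses_edge_in_walk p e : uses_edge o par p e -> e \in walk p.
Proof.
case/(has_nthP (o, o)) => i; rewrite size_zip /= => ilt.
rewrite nth_zip_cond size_zip /= ilt /= => /orP[/andP[/eqP <- _]|/andP[/eqP <- _]].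
  by apply: mem_nth => /=; exact: leq_trans ilt (geq_minl _ _).
by rewrite inE mem_nth ?orbT // (leq_trans ilt (geq_minr _ _)).
Qed.

Lemma uses_edge_of_desc p u e : path adj o p -> e != o -> u \in walk p ->
  desc u e -> uses_edge o par p e.
Proof.
move=> pa eo uw due.
have up : (index u (walk p) <= size p)%N by rewrite -ltnS index_mem.
have [|i iu ie] := crossing_before pa up eo; first by rewrite nth_index.
have ip : (i < size p)%N := leq_trans iu up.
apply/(has_nthP (o, o)); exists i; first by rewrite size_zip /=; lia.
rewrite nth_zip_cond size_zip /= (_ : (i < minn (size p).+1 (size p))%N) /=; last by lia.
move: (adj_vtx pa ip) ie; rewrite /edge_of /adj.
case H: (up_rel _ _) => /=; [move=> _ <- | move=> H2 <-].
  by case/andP: H => _ /eqP <-; rewrite !eqxx.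
by case/andP: H2 => _ /eqP <-; rewrite !eqxx orbT.
Qed.

Lemma two_le_crossings p e : valid_trip o par p -> e != o -> e \in walk p ->
  (2 <= crossings p (size p) e)%N.
Proof.
case/and3P => pa /eqP lo _ eo ew.
set m := index e (walk p).
have me : vtx p m = e by rewrite nth_index.
have mp : (m <= size p)%N by rewrite -ltnS index_mem.
have endo : vtx p (size p) = o by have := nth_last o (o :: p); rewrite /= lo.
have desc_o_e : desc o e = false by apply/negbTE; apply: contra eo => /desc_root ->.
(* The walk enters V_e before reaching e and leaves it before returning to o. *)
have [|i1 /andP[_ i1m] flip1] := exists_flip (f := fun i => desc (vtx p i) e) (leq0n m).
  by rewrite me (connect0 _ e : desc e e) /= desc_o_e.
have [|i2 /andP[mi2 i2p] flip2] := exists_flip (f := fun i => desc (vtx p i) e) mp.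
  by rewrite me endo (connect0 _ e : desc e e) desc_o_e.
have i1p : (i1 < size p)%N := leq_trans i1m mp.
apply/card_gt1P; exists (Ordinal i1p), (Ordinal i2p); split.
- by rewrite inE /=; apply/eqP; apply: edge_of_desc_flip flip1; apply: adj_vtx.
- by rewrite inE /=; apply/eqP; apply: edge_of_desc_flip flip2; apply: adj_vtx.
- by rewrite -val_eqE /= neq_ltn (leq_trans i1m mi2).
Qed.

Hypothesis len_gt0 : pos_lengths o len.

Lemma mst0 : mst set0 = 0.
Proof. by apply: big1 => w /andP[_ /existsP[u]]; rewrite inE. Qed.

Lemma mstS (A B : {set V}) : A \subset B -> mst A <= mst B.
Proof.
move=> /subsetP AB; rewrite /mst [leLHS]big_mkcond [leRHS]big_mkcond.
apply: ler_sum => w _; case: ifP => [/andP[wo /existsP[u /andP[uA duw]]]|_].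
  by rewrite wo (_ : [exists u in B, desc u w]) //; apply/existsP; exists u; rewrite AB.
by case: ifP => // /andP[wo _]; exact: ltW (len_gt0 wo).
Qed.

Lemma mstU_le (A B : {set V}) : mst (A :|: B) <= mst A + mst B.
Proof.
rewrite /mst [leLHS]big_mkcond [X in _ <= X + _]big_mkcond.
rewrite [X in _ <= _ + X]big_mkcond -big_split /=; apply: ler_sum => w _.
have [wo|] := boolP (w != o); last by rewrite /= addr0.
have le0 := ltW (len_gt0 wo).
have if_ge0 b : 0 <= (if b then len w else 0) by case: b.
case: existsP => [[u /andP[/setUP[uA|uB] duw]]|_] /=; last exact: addr_ge0.
  by rewrite (_ : [exists u in A, desc u w]) ?lerDl //; apply/existsP; exists u; rewrite uA.
by rewrite (_ : [exists u in B, desc u w]) ?lerDr //; apply/existsP; exists u; rewrite uB.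
Qed.

Lemma mst_bigcup_le (I : Type) (s : seq I) (P : pred I) (A : I -> {set V}) :
  mst (\bigcup_(x <- s | P x) A x) <= \sum_(x <- s | P x) mst (A x).
Proof.
apply: (big_ind2 (fun Y r => mst Y <= r)) => // [|Y1 r1 Y2 r2 h1 h2].
  by rewrite mst0.
exact: le_trans (mstU_le _ _) (lerD h1 h2).
Qed.

Lemma mst_le_time_to p n (Y : {set V}) : path adj o p -> (n <= size p)%N ->
  {in Y, forall u, index u (walk p) <= n}%N -> mst Y <= time_to o par len p n.
Proof.
move=> pa np Yn; rewrite time_to_crossings // /mst [leLHS]big_mkcond [leRHS]big_mkcond.
apply: ler_sum => w _ /=; have [wo|] := boolP (w != o) => //=.
have le0 := ltW (len_gt0 wo).
case: existsP => [[u /andP[uY duw]]|_]; last exact: mulrn_wge0.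
have uw : u \in walk p by rewrite -index_mem (leq_ltn_trans (Yn u uY)).
have cr : (0 < crossings p n w)%N.
  by apply: (crossings_gt0 (m := index u (walk p))); rewrite ?Yn ?np ?nth_index.
by rewrite -[leLHS]mulr1n ler_wpMn2l.
Qed.

Lemma twice_used_len_le_trip_len p : valid_trip o par p ->
  2 * \sum_(e | e != o) (uses_edge o par p e)%:R * len e <= trip_len o par len p.
Proof.
move=> vp; have /and3P[pa _ _] := vp.
rewrite /trip_len time_to_crossings // mulr_sumr; apply: ler_sum => e eo.
have le0 := ltW (len_gt0 eo).
case U: (uses_edge o par p e); last by rewrite mul0r mulr0 mulrn_wge0.
rewrite mul1r mulrC mulr_natr ler_wpMn2l //.
exact: two_le_crossings vp eo (uses_edge_in_walk U).
Qed.

End Walks.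

Section Schedule.
Variables (R : realType) (V : finType) (o : V) (par : V -> V) (len : V -> R).
Variables (Req : finType) (rel_t : Req -> R) (loc : Req -> V) (k : nat).
Variables (S : solution R V Req k) (F : R).
Hypothesis len_gt0 : pos_lengths o len.
Hypothesis feasS : feasible o par len rel_t loc S.
Hypothesis flow_le : forall q, flow_time o par len rel_t loc S q <= F.
Hypothesis F_gt0 : 0 < F.
Local Notation mst := (mst o par len).
Local Notation trips i := (iota 0 (size (sched S i))).

Definition trip_locs (i : 'I_k) (j : nat) : {set V} :=
  [set loc q | q in [pred q | asg S q == (i, j)]].

(* For j past the schedule, trip_of pads with the empty trip, which is valid. *)
Lemma valid_trip_of i j : valid_trip o par (trip_of S i j).2.
Proof.
case: feasS => valid _; case: (ltnP j (size (sched S i))) => [|jS]; first exact: valid.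
by rewrite /trip_of nth_default // /valid_trip /= eqxx.
Qed.

Lemma mst_trip_locs_le i j : mst (trip_locs i j) <= F.
Proof.
case: (pickP [pred q | asg S q == (i, j)]) => [q0 q0ij|none]; last first.
  rewrite (_ : trip_locs i j = set0) ?mst0 ?(ltW F_gt0) //.
  apply/setP => u; rewrite inE; apply/imsetP => -[q].
  by rewrite inE; move: (none q) => /= ->.
set p := (trip_of S i j).2.
case: (arg_maxnP (fun q => index (loc q) (walk o p)) q0ij) => qm /eqP qm_ij qm_max.
have [_ [_ [_ /(_ qm)]]] := feasS; rewrite qm_ij => -[_ qm_in rel_le].
have /and3P[pa _ _] := valid_trip_of i j.
apply: le_trans (_ : arrive o par len p (loc qm) <= F).
  apply: mst_le_time_to => //; first by rewrite -ltnS index_mem.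
  by move=> _ /imsetP[q qij ->]; apply: qm_max.
by have := flow_le qm; rewrite /flow_time /service_time qm_ij -/p; lra.
Qed.

Lemma mst_e_le_trips X e : e != o ->
  mst_e o par len loc X e <= F * (n_trips_using o par S X e)%:R.
Proof.
move=> eo.
pose Q i j := serves_some S X i j && uses_edge o par (trip_of S i j).2 e.
apply: le_trans (mstS par len_gt0 (B := \bigcup_(i < k)
    \bigcup_(j <- trips i | Q i j) trip_locs i j) _) _.
  apply/subsetP => _ /[!inE] /andP[/imsetP[q qX ->] dqe].
  case Eq: (asg S q) => [i j].
  have [_ [_ [_ /(_ q)]]] := feasS; rewrite Eq => -[jS q_in _].
  have Qij : Q i j.
    apply/andP; split.
      by rewrite /serves_some; apply/existsP; exists q; rewrite qX Eq eqxx.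
    have /and3P[pa _ _] := valid_trip_of i j.
    exact: uses_edge_of_desc pa eo q_in dqe.
  apply/bigcupP; exists i => //.
  rewrite (big_rem j) ?mem_iota //= Qij in_setU; apply/orP; left.
  by apply/imsetP; exists q; rewrite ?inE ?Eq.
apply: le_trans (mst_bigcup_le par len_gt0 _ _ _) _.
rewrite /n_trips_using natr_sum mulr_sumr; apply: ler_sum => i _.
apply: le_trans (mst_bigcup_le par len_gt0 _ _ _) _.
rewrite -sum1_count natr_sum mulr_sumr; apply: ler_sum => j _.
by rewrite mulr1 mst_trip_locs_le.
Qed.

Lemma cF_le_n_trips X e : e != o ->
  cF o par len loc F X e <= (n_trips_using o par S X e)%:Z.
Proof.
by move=> eo; rewrite /cF ceil_le_int ler_pdivrMr // -pmulrn mulrC mst_e_le_trips.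
Qed.

Lemma natr_n_trips_using X e : (n_trips_using o par S X e)%:R =
  \sum_(i < k) \sum_(j <- trips i | serves_some S X i j)
     (uses_edge o par (trip_of S i j).2 e)%:R :> R.
Proof.
rewrite natr_sum; apply: eq_bigr => i _.
rewrite -sum1_count big_mkcondr natr_sum; apply: eq_bigr => j _.
by case: uses_edge.
Qed.

Lemma costF_le_total_len X : costF o par len loc F X <= total_len o par len S X.
Proof.
rewrite /costF /total_len.
apply: le_trans (_ : 2 * \sum_(e | e != o) (n_trips_using o par S X e)%:R * len e <= _).
  rewrite ler_wpM2l //; apply: ler_sum => e eo.
  by rewrite ler_wpM2r ?(ltW (len_gt0 eo)) // pmulrn ler_int cF_le_n_trips.
have -> : \sum_(e | e != o) (n_trips_using o par S X e)%:R * len e =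
    \sum_(i < k) \sum_(j <- trips i | serves_some S X i j)
      \sum_(e | e != o) (uses_edge o par (trip_of S i j).2 e)%:R * len e.
  under eq_bigr => e _ do rewrite natr_n_trips_using mulr_suml.
  rewrite exchange_big; apply: eq_bigr => i _.
  by under eq_bigr => e _ do rewrite mulr_suml; rewrite exchange_big.
rewrite mulr_sumr; apply: ler_sum => i _; rewrite mulr_sumr; apply: ler_sum => j _.
exact: twice_used_len_le_trip_len (valid_trip_of i j).
Qed.

End Schedule.

Theorem claim4p2 (R : realType) (V : finType) (o : V) (par : V -> V)
  (len : V -> R) (Req : finType) (rel_t : Req -> R) (loc : Req -> V) (k : nat)
  (F : R) (S : solution R V Req k) (R' : {set Req}) :
  is_rooted_tree o par -> pos_lengths o len -> (1 <= k)%N ->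
  (forall q, 0 <= rel_t q) ->
  optimal o par len rel_t loc S -> 0 < F ->
  max_flow o par len rel_t loc S <= F ->
  (forall e : V, e != o ->
     cF o par len loc F R' e <= (n_trips_using o par S R' e)%:Z) /\
  costF o par len loc F R' <= total_len o par len S R'.
Proof.
move=> _ len_gt0 _ _ [feasS _] F_gt0 max_le.
have flow_le q : flow_time o par len rel_t loc S q <= F.
  exact: le_trans (le_bigmax _ _ q) max_le.
split; first exact: (cF_le_n_trips len_gt0 feasS flow_le F_gt0).
exact: (costF_le_total_len len_gt0 feasS flow_le F_gt0).
Qed.
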